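(* Let $(F,\cdot)$ be a scalar group and let $\boxplus$ be an operation such that $(F,\boxplus,\cdot)$ is a left near-field. Then $0$ is the identity element of $(F,\boxplus)$. For every $\alpha\in F$, the additive inverse of $\alpha$ with respect to $\boxplus$ is either $-\alpha$ or $\alpha$, and if it is $\alpha$ (rather than $-\alpha$) then $1\boxplus1=0$. Moreover, $\alpha\cdot(-1)=(-1)\cdot\alpha$ for all $\alpha\in F$.
   Context: A scalar group is a tuple $(F,\cdot,1,0,-1)$ where $(F,\cdot,1)$ is a monoid, $0\ne1$, $0\alpha=\alpha0=0$, $\{1,-1\}$ is exactly the solution set of $x^2=1$, and $(F\setminus\{0\},\cdot)$ is a group; $-\alpha:=(-1)\cdot\alpha$. A left near-field $(F,\boxplus,\cdot)$: $(F,\boxplus)$ a group, $(F\setminus\{0'\},\cdot)$ a group where $0'$ is the $\boxplus$-identity, $0'\cdot\alpha=0'$, and $\gamma(\alpha\boxplus\beta)=\gamma\alpha\boxplus\gamma\beta$. *)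

Definition is_scalar_group {F : Type} (mul : F -> F -> F) (one zero m1 : F) : Prop :=
  (forall a b c, mul a (mul b c) = mul (mul a b) c) /\
  (forall a, mul one a = a /\ mul a one = a) /\
  zero <> one /\
  (forall a, mul zero a = zero /\ mul a zero = zero) /\
  (forall x, mul x x = one <-> (x = one \/ x = m1)) /\
  (forall a b, a <> zero -> b <> zero -> mul a b <> zero) /\
  (forall a, a <> zero -> exists b, b <> zero /\ mul a b = one /\ mul b a = one).

Definition is_left_near_field {F : Type} (add mul : F -> F -> F) : Prop :=
  exists z' : F,
    (forall a b c, add a (add b c) = add (add a b) c) /\
    (forall a, add z' a = a /\ add a z' = a) /\
    (forall a, exists b, add a b = z' /\ add b a = z') /\
    (forall a b, a <> z' -> b <> z' -> mul a b <> z') /\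
    (forall a b c, mul a (mul b c) = mul (mul a b) c) /\
    (exists e, e <> z' /\
       (forall a, a <> z' -> mul e a = a /\ mul a e = a) /\
       (forall a, a <> z' -> exists b, b <> z' /\ mul a b = e /\ mul b a = e)) /\
    (forall a, mul z' a = z') /\
    (forall g a b, mul g (add a b) = add (mul g a) (mul g b)).

(* In a scalar group, every conjugate of the involution -1 is again a square
   root of 1, hence equals 1 or -1; in either case -1 commutes with the
   conjugating element.  In the near-field, z' * 0 equals both z' and 0, so the
   additive identity is 0.  Writing n for the additive inverse of 1, left
   distributivity gives a (+) a n = a (1 (+) n) = a 0 = 0, so the additive
   inverse of a is a n.  Applying this to a = n shows n n = 1, so n is 1 or -1:
   the inverse of a is a = a 1 or a (-1) = -a, and n = 1 means 1 (+) 1 = 0. *)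

From Stdlib Require Import Classical.

Section ScalarGroup.

Variables (F : Type) (mul : F -> F -> F) (one zero m1 : F).
Hypothesis mulA : forall a b c, mul a (mul b c) = mul (mul a b) c.
Hypothesis mul1x : forall a, mul one a = a.
Hypothesis mulx1 : forall a, mul a one = a.
Hypothesis mul0x : forall a, mul zero a = zero.
Hypothesis mulx0 : forall a, mul a zero = zero.
Hypothesis sqr_eq1 : forall x, mul x x = one <-> x = one \/ x = m1.

Lemma sqr_conj_eq1 (a ai x : F) :
  mul a ai = one -> mul ai a = one -> mul x x = one ->
  mul (mul ai (mul x a)) (mul ai (mul x a)) = one.
Proof.
  intros Haai Haia Hxx.
  rewrite !mulA.
  replace (mul (mul (mul ai x) a) ai) with (mul ai x)
    by (rewrite <- mulA, Haai, mulx1; reflexivity).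
  rewrite <- (mulA ai x x), Hxx, mulx1.
  exact Haia.
Qed.

Lemma mul_m1C (a : F) :
  (a <> zero -> exists ai, mul a ai = one /\ mul ai a = one) ->
  mul a m1 = mul m1 a.
Proof.
  intros Hinv.
  destruct (classic (a = zero)) as [-> | Ha].
  { rewrite mul0x, mulx0. reflexivity. }
  destruct (Hinv Ha) as [ai [Haai Haia]].
  assert (Hconj : mul a (mul ai (mul m1 a)) = mul m1 a)
    by (rewrite mulA, Haai, mul1x; reflexivity).
  assert (Hsqr : mul (mul ai (mul m1 a)) (mul ai (mul m1 a)) = one)
    by (apply sqr_conj_eq1; [exact Haai | exact Haia | apply sqr_eq1; right; reflexivity]).
  apply sqr_eq1 in Hsqr as [Hb | Hb]; rewrite Hb in Hconj.
  - (* m1 a = a forces m1 = 1 *)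
    rewrite mulx1 in Hconj.
    assert (Hm1 : m1 = one)
      by (rewrite <- (mulx1 m1), <- Haai, mulA, <- Hconj, Haai; reflexivity).
    rewrite Hm1, mul1x, mulx1. reflexivity.
  - exact Hconj.
Qed.

End ScalarGroup.

Section LeftNearField.

Variables (F : Type) (add mul : F -> F -> F) (one zero n : F).
Hypothesis addA : forall a b c, add a (add b c) = add (add a b) c.
Hypothesis add0x : forall a, add zero a = a.
Hypothesis addx0 : forall a, add a zero = a.
Hypothesis mulx1 : forall a, mul a one = a.
Hypothesis mulx0 : forall a, mul a zero = zero.
Hypothesis mulDr : forall g a b, mul g (add a b) = add (mul g a) (mul g b).
Hypothesis add_one_n : add one n = zero.
Hypothesis add_n_one : add n one = zero.

Lemma add_inv_uniq (a b c : F) : add a b = zero -> add c a = zero -> b = c.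
Proof.
  intros Hab Hca.
  rewrite <- (add0x b), <- Hca, <- addA, Hab, addx0. reflexivity.
Qed.

Lemma add_mul_n (a : F) : add a (mul a n) = zero /\ add (mul a n) a = zero.
Proof.
  split.
  - rewrite <- (mulx1 a) at 1. rewrite <- mulDr, add_one_n. apply mulx0.
  - rewrite <- (mulx1 a) at 2. rewrite <- mulDr, add_n_one. apply mulx0.
Qed.

Lemma add_inv_mul_n (a b : F) : add a b = zero -> b = mul a n.
Proof.
  intros Hab. apply (add_inv_uniq a); [exact Hab | apply add_mul_n].
Qed.

Lemma mul_n_n : mul n n = one.
Proof.
  symmetry. apply add_inv_mul_n. exact add_n_one.
Qed.

End LeftNearField.

Theorem mainTheorem13 (F : Type) (mul add : F -> F -> F) (one zero m1 : F)
  (Hsg : is_scalar_group mul one zero m1)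
  (Hnf : is_left_near_field add mul) :
  (* 0 is the identity of (F, add) *)
  (forall a, add zero a = a /\ add a zero = a) /\
  (* the additive inverse of a is -a or a *)
  (forall a b, add a b = zero /\ add b a = zero -> b = mul m1 a \/ b = a) /\
  (* if the inverse of a is a (rather than -a), then 1 + 1 = 0 *)
  (forall a, add a a = zero -> a <> mul m1 a -> add one one = zero) /\
  (* a * (-1) = (-1) * a *)
  (forall a, mul a m1 = mul m1 a).
Proof.
  destruct Hsg as [mulA [mul1 [_ [mul0 [sqr_eq1 [_ inv]]]]]].
  destruct Hnf as [z [addA [add0 [add_inv [_ [_ [_ [mulzx mulDr]]]]]]]].
  assert (Hz : z = zero) by (rewrite <- (proj2 (mul0 z)), mulzx; reflexivity).
  subst z.
  pose proof (fun a => proj1 (mul1 a)) as mul1x.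
  pose proof (fun a => proj2 (mul1 a)) as mulx1.
  pose proof (fun a => proj1 (mul0 a)) as mul0x.
  pose proof (fun a => proj2 (mul0 a)) as mulx0.
  pose proof (fun a => proj1 (add0 a)) as add0x.
  pose proof (fun a => proj2 (add0 a)) as addx0.
  assert (Hm1C : forall a, mul a m1 = mul m1 a).
  { intros a. apply (mul_m1C F mul one zero m1); auto.
    intros Ha. destruct (inv a Ha) as [ai [_ Hai]]. exists ai. exact Hai. }
  destruct (add_inv one) as [n [Hn1 H1n]].
  pose proof (add_inv_mul_n F add mul one zero n addA add0x addx0 mulx1 mulx0 mulDr Hn1 H1n)
    as Hopp.
  assert (Hn : n = one \/ n = m1)
    by (apply sqr_eq1, (mul_n_n F add mul one zero n); auto).
  split; [exact add0 | split; [| split]].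
  - intros a b [Hab _]. rewrite (Hopp a b Hab).
    destruct Hn as [-> | ->]; [right; apply mulx1 | left; apply Hm1C].
  - intros a Haa Hne. destruct Hn as [<- | ->]; [exact Hn1 |].
    exfalso. apply Hne. rewrite <- Hm1C. exact (Hopp a a Haa).
  - exact Hm1C.
Qed.
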